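(* For any binary classification task (finite dataset $S$ of $n$ labeled points, hypothesis class $H$ of finite VC dimension), the algorithm described in the context executes its main loop at most $\log_2(2n)$ times.
   Context: $D_S(h,h')=\frac1n\sum_{x\in S}\mathbb{I}(h(x)\ne h'(x))$, $B_H(h,r)=\{h'\in H:D_S(h,h')\le r\}$, $\mathrm{DIS}(V)=\{x\in S:\exists h_1,h_2\in V,h_1(x)\ne h_2(x)\}$, $\theta=\sup_{h\in H}\sup_{r>0}\frac{|\mathrm{DIS}(B_H(h,r))|}{rn}$, $V_H$ the VC dimension, $\mathrm{radius}(V)=\min\{r:\exists h'\in V,V\subseteq B_H(h',r)\}$. Classifiers are identified with their labelings of $S$. LB/UB: for a uniformly random subset $S''$ of size $m$ with queried labels and confidence $\delta_0$, $\mathrm{LB}=\widehat{\mathrm{err}}(h)-\gamma$, $\mathrm{UB}=\widehat{\mathrm{err}}(h)+\gamma$ with $\widehat{\mathrm{err}}$ the empirical error on $S''$ and $m=\frac{64}{\gamma^2}(2V_H\ln\frac{12}\gamma+\ln\frac4{\delta_0})$. Algorithm (constants $c_1,b_1,c_2,b_2$): $\delta'=\delta/(2\log_2(2n))$, $H_0=H$, $r_0=1$, $i=0$. While $|H_i|>1$: draw a uniformly random $S_i\subseteq\mathrm{DIS}(H_i)$ of size $c_1\theta^2(V_H\ln\theta+\ln\frac1{\delta'})+b_1$, query labels; $\beta=\min_{h\in H_i}\mathrm{UB}(S_i,h,\delta')$; $H_{i+1}=\{h\in H_i:\mathrm{LB}(S_i,h,\delta')\le\beta\}$; $r_{i+1}=\mathrm{radius}(H_{i+1})$;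 if $r_{i+1}>r_i/2$, draw a uniformly random $S'\subseteq\mathrm{DIS}(H_i)$ of size $\frac{c_2\theta^2}{\epsilon^2}(V_H\ln\frac\theta\epsilon+\ln\frac1\delta)+b_2$ and return $\arg\min_{h\in H_i}\mathrm{UB}(S',h,\delta/2)$; else $i\leftarrow i+1$. Finally return the remaining classifier. *)

From HB Require Import structures.
From mathcomp Require Import all_boot all_order all_algebra.
From mathcomp Require Import all_classical all_reals all_analysis.
Set Implicit Arguments. Unset Strict Implicit. Unset Printing Implicit Defensive.
Import Order.TTheory GRing.Theory Num.Theory.
Local Open Scope ring_scope.

Section Defs.
Variables (R : realType) (X : finType).
(* The dataset S is the finite type X (n = #|X|); a classifier is
   identified with its labeling of S. *)
Notation clf := {ffun X -> bool}.

Definition nS : R := #|X|%:R.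

Definition distS (h h' : clf) : R := #|[set x | h x != h' x]|%:R / nS.

Definition ballH (H : {set clf}) (h : clf) (r : R) : {set clf} :=
  [set h' in H | distS h h' <= r].

Definition DIS (V : {set clf}) : {set X} :=
  [set x | [exists h1 in V, exists h2 in V, h1 x != h2 x]].

Definition theta (H : {set clf}) : R :=
  sup [set t : R | exists h r, h \in H /\ 0 < r /\
        t = #|DIS (ballH H h r)|%:R / (r * nS)]%classic.

Definition shattered (H : {set clf}) (A : {set X}) : bool :=
  [forall B in powerset A, exists h in H, [set x in A | h x] == B].
Definition VCdim (H : {set clf}) : nat :=
  \max_(A : {set X} | shattered H A) #|A|.

Definition radius (V : {set clf}) : R :=
  inf [set r : R | exists h', h' \in V /\ V \subset ballH V h' r]%classic.

Definition emp_err (y : X -> bool) (s : seq X) (h : clf) : R :=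
  (count (fun x => h x != y x) s)%:R / (size s)%:R.

Definition gamma_of (m : nat) (d0 : R) (V : nat) : R :=
  xget 1 [set g : R | 0 < g /\
     m%:R = 64 / g ^+ 2 * (2 * V%:R * ln (12 / g) + ln (4 / d0))]%classic.

Definition LB (H : {set clf}) (y : X -> bool) (s : seq X) (d0 : R) (h : clf) : R :=
  emp_err y s h - gamma_of (size s) d0 (VCdim H).
Definition UB (H : {set clf}) (y : X -> bool) (s : seq X) (d0 : R) (h : clf) : R :=
  emp_err y s h + gamma_of (size s) d0 (VCdim H).

Definition log2 (x : R) : R := ln x / ln 2.

Definition delta' (delta : R) : R := delta / (2 * log2 (2 * nS)).

Definition step (H : {set clf}) (y : X -> bool) (delta : R)
    (Hi : {set clf}) (s : seq X) : {set clf} :=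
  [set h in Hi | [forall h' in Hi,
      LB H y s (delta' delta) h <= UB H y s (delta' delta) h']].

Fixpoint Hs (H : {set clf}) (y : X -> bool) (delta : R)
    (samp : nat -> seq X) (i : nat) : {set clf} :=
  match i with
  | 0 => H
  | i'.+1 => step H y delta (Hs H y delta samp i') (samp i')
  end.

Definition rs (H : {set clf}) (y : X -> bool) (delta : R)
    (samp : nat -> seq X) (i : nat) : R :=
  if i is 0 then 1 else radius (Hs H y delta samp i).

(* the body of the main loop is executed for index i: every previous
   iteration j continued (|H_j| > 1 and r_{j+1} <= r_j/2), and the loop
   test |H_i| > 1 succeeds *)
Definition executed (H : {set clf}) (y : X -> bool) (delta : R)
    (samp : nat -> seq X) (i : nat) : Prop :=
  (forall j, (j < i)%N ->
     (1 < #|Hs H y delta samp j|)%N /\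
     rs H y delta samp j.+1 <= rs H y delta samp j / 2) /\
  (1 < #|Hs H y delta samp i|)%N.

Definition m1 (H : {set clf}) (c1 b1 delta : R) : nat :=
  `|Num.ceil (c1 * theta H ^+ 2 *
       ((VCdim H)%:R * ln (theta H) + ln (1 / delta' delta)) + b1)|%N.

Definition valid_samples (H : {set clf}) (y : X -> bool) (c1 b1 delta : R)
    (samp : nat -> seq X) : Prop :=
  forall i, executed H y delta samp i ->
    size (samp i) = m1 H c1 b1 delta /\
    all (fun x => x \in DIS (Hs H y delta samp i)) (samp i).

End Defs.

From Pilot Require Import Defs.
From HB Require Import structures.
From mathcomp Require Import all_boot all_order all_algebra.
From mathcomp Require Import all_classical all_reals all_analysis.
Import Order.TTheory GRing.Theory Num.Theory.
Local Open Scope ring_scope.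
Set Implicit Arguments. Unset Strict Implicit. Unset Printing Implicit Defensive.

(** Two distinct labelings of the n points of S disagree on at least one
    point, so every version space with two or more classifiers has radius at
    least 1/n.  The loop only continues while the radius at least halves,
    starting from r_0 = 1; hence if iteration i runs then 1/n <= r_i <= 2^-i,
    i.e. 2^(i+1) <= 2n. *)

Section Distance.
Variables (R : realType) (X : finType).
Implicit Types (a b : {ffun X -> bool}) (V : {set {ffun X -> bool}}).

Lemma exists_ffun_neq a b : a != b -> exists x, a x != b x.
Proof.
move=> neq_ab; apply/existsP; apply: contraNT neq_ab => /existsPn eq_ab.
by apply/eqP/ffunP => x; apply/eqP; rewrite -[_ == _]negbK eq_ab.
Qed.

Lemma nS_ge1 (x : X) : 1 <= nS R X.
Proof. by rewrite /nS ler1n; apply/card_gt0P; exists x. Qed.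

Lemma nS_gt0 (x : X) : 0 < nS R X.
Proof. exact: lt_le_trans ltr01 (nS_ge1 x). Qed.

Lemma distS_le1 a b : distS R a b <= 1.
Proof.
have [X0|/card_gt0P [x _]] := posnP #|X|.
  by rewrite /distS /nS X0 invr0 mulr0.
rewrite /distS ler_pdivrMr ?mul1r ?(nS_gt0 x) //.
by rewrite /nS ler_nat max_card.
Qed.

Lemma distS_ge_invn a b : a != b -> (nS R X)^-1 <= distS R a b.
Proof.
move=> /exists_ffun_neq [x neq_x].
rewrite /distS ler_pdivlMr ?(nS_gt0 x) // mulVf ?gt_eqF ?(nS_gt0 x) // ler1n.
by apply/card_gt0P; exists x; rewrite inE.
Qed.

Lemma radius_ge_invn V : (1 < #|V|)%N -> (nS R X)^-1 <= Defs.radius R V.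
Proof.
move=> /card_gt1P [a [b [aV bV neq_ab]]].
apply: lb_le_inf.
  exists 1, a; split => //; apply/fintype.subsetP => h hV.
  by rewrite inE hV distS_le1.
move=> r [c [cV /fintype.subsetP V_in_ball]].
have [h [hV neq_ch]] : exists h, h \in V /\ c != h.
  by case: (eqVneq c a) => [->|?]; [exists b | exists a].
have := V_in_ball h hV; rewrite inE hV /= => dist_le_r.
exact: le_trans (distS_ge_invn neq_ch) dist_le_r.
Qed.

End Distance.

Lemma natr_le_log2 (R : realType) (x : R) (k : nat) :
  2 ^+ k <= x -> k%:R <= log2 x.
Proof.
move=> pow_le_x; have pow_gt0 : 0 < (2 : R) ^+ k by rewrite exprn_gt0.
rewrite /log2 ler_pdivlMr ?ln_gt0 ?ltr1n // mulr_natl -lnXn //.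
by rewrite ler_ln ?posrE // (lt_le_trans pow_gt0).
Qed.

Section Run.
Variables (R : realType) (X : finType) (y : X -> bool).
Variables (H : {set {ffun X -> bool}}) (delta : R) (samp : nat -> seq X).
Local Notation executed := (executed H y delta samp).
Local Notation rs := (rs H y delta samp).

Lemma rs_le_expVn i : executed i -> forall k, (k <= i)%N -> rs k <= (2 ^+ k)^-1.
Proof.
move=> [continued _]; elim=> [|k IHk] le_ki; first by rewrite expr0 invr1.
have [_ halved] := continued k le_ki.
apply: le_trans halved _.
by rewrite exprS invfM [_^-1 * _]mulrC ler_pM2r ?invr_gt0 // IHk // ltnW.
Qed.

Lemma executed_nS_ge1 i : executed i -> 1 <= nS R X.
Proof.
by move=> [_ /card_gt1P [a [b [_ _ /exists_ffun_neq [x _]]]]]; apply: nS_ge1 x.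
Qed.

Lemma invn_le_rs i : executed i -> (nS R X)^-1 <= rs i.
Proof.
move=> exec_i; have nS_ge1 := executed_nS_ge1 exec_i.
case: i exec_i => [|i] [_ card_gt1]; last exact: radius_ge_invn.
by rewrite invf_le1 // (lt_le_trans ltr01).
Qed.

Lemma expn_le_nS i : executed i -> 2 ^+ i <= nS R X.
Proof.
move=> exec_i; have rs_le := rs_le_expVn exec_i (leqnn i).
rewrite -lef_pV2 ?posrE ?exprn_gt0 ?(lt_le_trans ltr01 (executed_nS_ge1 exec_i)) //.
exact: le_trans (invn_le_rs exec_i) rs_le.
Qed.

End Run.

Theorem lemma10 (R : realType) (X : finType) (y : X -> bool)
  (H : {set {ffun X -> bool}}) (c1 b1 delta : R) (samp : nat -> seq X) :
  valid_samples H y c1 b1 delta samp ->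
  forall i : nat, executed H y delta samp i ->
    (i.+1)%:R <= log2 (2 * (nS R X)).
Proof.
move=> _ i exec_i; apply: natr_le_log2.
by rewrite exprS ler_pM2l // (expn_le_nS exec_i).
Qed.
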